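(* Let $\mathcal{L}$ be a set of graphs with no sources (all of sort $\emptyset$). Then $\mathcal{L}$ is recognizable in the graph algebra $\mathbf{G}$ if and only if, for every finite set $\tau\subseteq\mathbb{S}$, $\mathcal{L}$ is recognizable in the algebra $\mathbf{G}^\tau$.
   Context: Fix a countably infinite set $\mathbb{S}$ of source labels and a finite set $\mathbb{A}$ of edge labels with arities $\ge1$. A graph of sort $\tau$ ($\tau\subseteq\mathbb{S}$ finite) is an isomorphism class of finite hypergraphs with $\mathbb{A}$-labelled edges (each edge attached to a sequence of vertices of length the arity of its label) together with an injective map from $\tau$ to the vertices ($s$-sources). The HR algebra $\mathbf{G}$ has the finite subsets of $\mathbb{S}$ as sorts, universe of sort $\tau$ the graphs of sort $\tau$, and operations: constants $\mathbf{0}_\tau$ (only sources from $\tau$), $\mathbf{a}_{(s_1,\ldots,s_{\#a})}$ (one $a$-edge attached to an $s_1$-,…, $s_{\#a}$-source); unary $\mathsf{restrict}_\tau$ (removes source labels outside $\tau$, keeping vertices; sort $\tau'\mapsto\tau\cap\tau'$); unary $\mathsf{rename}_\alpha$ for finite permutations $\alpha$ of $\mathbb{S}$ (source map $\xi\mapsto\xi\circ\alpha$, sort $\tau\mapsto\alpha^{-1}(\tau)$); binary $\parallel$ (disjoint union then fusion of sources with equal label). For finite $\tau$, $\mathbf{G}^\tau$ is the subalgebra with sorts the subsets of $\tau$, universe the graphs of sort $\subseteq\tau$, and operations $\mathbf{0}_{\tau'}$ ($\tau'\subseteq\tau$), $\mathbf{a}_{(s_1,\ldots)}$ ($s_i\in\tau$),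 $\mathsf{restrict}_{\tau'}$ ($\tau'\subseteq\tau$), $\mathsf{rename}_\alpha$ ($\alpha$ fixing every element outside $\tau$), $\parallel$. A set $L$ is recognizable in a many-sorted algebra $\mathbf{A}$ if there is a congruence on $\mathbf{A}$ (equivalence relating only elements of the same sort, compatible with all operations) with finitely many classes of each sort such that $L$ is a union of classes. *)

From mathcomp Require Import all_boot all_fingroup.
From mathcomp Require Import finmap.
From Stdlib Require List.

Set Implicit Arguments.
Unset Strict Implicit.
Unset Printing Implicit Defensive.

Local Open Scope fset_scope.

(* Source labels: S = nat (a countably infinite set).
   A concrete graph: vertices 0 .. nv-1; a list (multiset) of edges, each
   an edge label together with the sequence of attached vertices; a finite
   sort (set of source labels) and a source map src, meaningful on sort. *)
Record cgraph (A : Type) := CGraph {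
  nv : nat;
  edges : seq (A * seq nat);
  gsort : {fset nat};
  src : nat -> nat
}.

Section Graphs.
Variables (A : finType) (ar : A -> nat).

Definition wf (g : cgraph A) : Prop :=
  (forall s, s \in gsort g -> src g s < nv g) /\
  {in gsort g &, injective (src g)} /\
  (forall e, e \in edges g -> size e.2 = ar e.1 /\ all (fun v => v < nv g) e.2).

(* Isomorphism of concrete graphs (graphs are isomorphism classes). *)
Definition iso (g h : cgraph A) : Prop :=
  nv g = nv h /\ gsort g = gsort h /\
  exists f : nat -> nat,
    (forall v, v < nv g -> f v < nv h) /\
    {in [pred v | v < nv g] &, injective f} /\
    (forall s, s \in gsort g -> f (src g s) = src h s) /\
    perm_eq [seq (e.1, map f e.2) | e <- edges g] (edges h).

Definition restrict (tau : {fset nat}) (g : cgraph A) : cgraph A :=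
  CGraph (nv g) (edges g) (gsort g `&` tau) (src g).

(* The finite permutation of nat induced by p : {perm 'I_n} (identity
   above n).  Every finite permutation of nat is of this form. *)
Definition extperm (n : nat) (p : {perm 'I_n}) (x : nat) : nat :=
  match insub x with Some i => val (p i) | None => x end.

Definition rename (n : nat) (p : {perm 'I_n}) (g : cgraph A) : cgraph A :=
  CGraph (nv g) (edges g) [fset extperm p^-1 x | x in gsort g]
         (fun s => src g (extperm p s)).

(* Parallel composition: disjoint union, then fusion of equally labelled
   sources.  Vertices of g are kept; each vertex of h is sent either to the
   corresponding source of g (if it is a common source) or to a fresh vertex. *)
Definition par (g h : cgraph A) : cgraph A :=
  let common := enum_fset (gsort g `&` gsort h) in
  let fused v := has (fun s => src h s == v) common in
  let nonfused := [seq v <- iota 0 (nv h) | ~~ fused v] in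
  let hmap v := match [seq s <- common | src h s == v] with
                | s :: _ => src g s
                | [::] => (nv g + index v nonfused)%N
                end in
  CGraph (nv g + size nonfused)%N
         (edges g ++ [seq (e.1, map hmap e.2) | e <- edges h])
         (gsort g `|` gsort h)
         (fun s => if s \in gsort g then src g s else hmap (src h s)).

(* Recognizability in a subalgebra of G determined by:
   - sort_ok : which sorts belong to the algebra,
   - restr_ok : which restrict_tau operations are available,
   - ren_ok : which rename_alpha operations are available.
   (Constants are irrelevant for compatibility of an equivalence.)
   The elements are isomorphism classes of well-formed graphs; an
   equivalence on them is represented by an isomorphism-invariant relation
   on well-formed concrete graphs. *)
Definition recognizable_in (sort_ok : {fset nat} -> Prop)
    (restr_ok : {fset nat} -> Prop)
    (ren_ok : forall n, {perm 'I_n} -> Prop)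
    (L : cgraph A -> Prop) : Prop :=
  exists R : cgraph A -> cgraph A -> Prop,
    (forall g h, R g h -> [/\ wf g, wf h, sort_ok (gsort g) & gsort g = gsort h]) /\
    (forall g h, wf g -> wf h -> sort_ok (gsort g) -> iso g h -> R g h) /\
    (forall g h, R g h -> R h g) /\
    (forall g h k, R g h -> R h k -> R g k) /\
    (forall tau g g', restr_ok tau -> R g g' -> R (restrict tau g) (restrict tau g')) /\
    (forall n (p : {perm 'I_n}) g g', ren_ok n p -> R g g' ->
        R (rename p g) (rename p g')) /\
    (forall g g' h h', R g g' -> R h h' -> R (par g h) (par g' h')) /\
    (forall tau, sort_ok tau -> exists reps : seq (cgraph A),
        forall g, wf g -> gsort g = tau -> exists r, List.In r reps /\ R g r) /\
    (forall g h, R g h -> L g -> L h).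

Definition recognizable_G (L : cgraph A -> Prop) : Prop :=
  recognizable_in (fun _ => True) (fun _ => True) (fun _ _ => True) L.

Definition recognizable_Gtau (tau : {fset nat}) (L : cgraph A -> Prop) : Prop :=
  recognizable_in (fun sigma => sigma `<=` tau) (fun sigma => sigma `<=` tau)
    (fun n p => forall x, x \notin tau -> extperm p x = x) L.

End Graphs.

(* Restricting a congruence of G to the sorts included in tau gives a congruence
   of G^tau.  Conversely, consider the syntactic congruence of L: g ~ h when they
   have the same sort and, for every graph H, the sourceless graph
   restrict_0 (g || H) is in L exactly when restrict_0 (h || H) is.  Moving the
   outer operation into the context, restrict_0 (op g || H) is isomorphic to
   restrict_0 (g || H') for restrictions, renamings (H' = restrict H, rename H)
   and parallel composition (by associativity and commutativity of ||), so ~ is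
   a congruence.  It saturates L, whose graphs have no sources, by taking H
   empty.  Finally, on graphs of sort tau only the tau-sources of H matter, so
   ~ is coarser there than any congruence of G^tau recognizing L, which has
   finitely many classes. *)

From mathcomp Require Import all_boot all_fingroup.
From mathcomp Require Import finmap.
From Stdlib Require List.

Set Implicit Arguments.
Unset Strict Implicit.
Unset Printing Implicit Defensive.

Local Open Scope fset_scope.

Lemma extperm_lt n (p : {perm 'I_n}) x (lt_xn : x < n) :
  extperm p x = val (p (Ordinal lt_xn)).
Proof. by rewrite /extperm insubT. Qed.

Lemma extperm_ge n (p : {perm 'I_n}) x : n <= x -> extperm p x = x.
Proof. by move=> le_nx; rewrite /extperm insubN // -leqNgt. Qed.

Lemma extpermK n (p : {perm 'I_n}) x : extperm p (extperm (p^-1)%g x) = x.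
Proof.
case: (ltnP x n) => [lt_xn|]; last by move=> le_nx; rewrite !extperm_ge.
rewrite (extperm_lt _ lt_xn) (extperm_lt _ (ltn_ord _)).
by rewrite (_ : Ordinal _ = (p^-1)%g (Ordinal lt_xn)) ?permKV //; apply: val_inj.
Qed.

Lemma extpermKV n (p : {perm 'I_n}) x : extperm (p^-1)%g (extperm p x) = x.
Proof. by rewrite -{2}(invgK p) extpermK. Qed.

Section IntervalMaps.
Variables (f : nat -> nat) (n : nat).
Hypothesis f_inj : forall a b, a < n -> b < n -> f a = f b -> a = b.

Lemma inj_on_leq n' : (forall v, v < n -> f v < n') -> n <= n'.
Proof.
move=> f_lt; pose F (i : 'I_n) : 'I_n' := Ordinal (f_lt i (ltn_ord i)).
have F_inj : injective F by move=> i j /(congr1 val) /f_inj eq_ij; apply/val_inj/eq_ij.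
by have := leq_card F F_inj; rewrite !card_ord.
Qed.

Lemma inj_on_surj : (forall v, v < n -> f v < n) ->
  forall u, u < n -> exists2 v, v < n & f v = u.
Proof.
move=> f_lt u lt_un; pose F (i : 'I_n) : 'I_n := Ordinal (f_lt i (ltn_ord i)).
have F_inj : injective F by move=> i j /(congr1 val) /f_inj eq_ij; apply/val_inj/eq_ij.
have [G _ FG] := injF_bij F_inj.
by exists (val (G (Ordinal lt_un))); [exact: ltn_ord | have := congr1 val (FG (Ordinal lt_un))].
Qed.

End IntervalMaps.

Definition first_preim (f : nat -> nat) n u := find (fun v => f v == u) (iota 0 n).

Lemma first_preimK f n u : first_preim f n u < n -> f (first_preim f n u) = u.
Proof.
move=> lt_pre; have : first_preim f n u < size (iota 0 n) by rewrite size_iota.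
by move/(etrans (has_find _ _))/(nth_find 0); rewrite nth_iota // => /eqP.
Qed.

Lemma first_preim_lt f n u v : v < n -> f v = u -> first_preim f n u < n.
Proof.
move=> lt_vn fv; rewrite -[X in _ < X](size_iota 0 n) -has_find.
by apply/hasP; exists v; rewrite ?mem_iota ?fv /=.
Qed.

Lemma first_preim_inj f n v : (forall a b, a < n -> b < n -> f a = f b -> a = b) ->
  v < n -> first_preim f n (f v) = v.
Proof.
move=> f_inj lt_vn; have lt_pre := first_preim_lt lt_vn erefl.
by apply: f_inj; rewrite ?first_preimK.
Qed.

(** * Gluings and parallel composition *)

Section Gluing.
Variables (A : finType) (ar : A -> nat).
Implicit Types g h k H : cgraph A.

Definition emap (f : nat -> nat) (e : A * seq nat) := (e.1, map f e.2).

Lemma map_emap_id (l : seq (A * seq nat)) : map (emap id) l = l.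
Proof. by rewrite -[RHS]map_id; apply/eq_map => -[a vs]; rewrite /emap map_id. Qed.

Lemma map_emap_comp (m f : nat -> nat) (l : seq (A * seq nat)) :
  map (emap m) (map (emap f) l) = map (emap (m \o f)) l.
Proof. by rewrite -map_comp; apply/eq_map => e; rewrite /emap /= -map_comp. Qed.

Lemma wf_src g s : wf ar g -> s \in gsort g -> src g s < nv g.
Proof. by case=> src_lt _; apply: src_lt. Qed.

Lemma wf_inj g s s' : wf ar g -> s \in gsort g -> s' \in gsort g ->
  src g s = src g s' -> s = s'.
Proof. by case=> _ [src_inj _]; apply: src_inj. Qed.

Lemma wf_edges g e : wf ar g -> e \in edges g ->
  size e.2 = ar e.1 /\ all (fun v => v < nv g) e.2.
Proof. by case=> _ [_ edges_wf]; apply: edges_wf. Qed.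

Lemma map_emap_comp_on g (m f f' : nat -> nat) : wf ar g ->
  (forall v, v < nv g -> m (f v) = f' v) ->
  map (emap m) (map (emap f) (edges g)) = map (emap f') (edges g).
Proof.
move=> wg mf; rewrite map_emap_comp; apply/eq_in_map => e /(wf_edges wg) [_ /allP e_lt].
by rewrite /emap /=; congr (_, _); apply/eq_in_map => v /e_lt; exact: mf.
Qed.

Definition fused g h v w :=
  exists s, [/\ s \in gsort g, s \in gsort h, v = src g s & w = src h s].

(* [k] is [g] and [h] glued along their common sources, [f1] and [f2] embedding
   their vertices.  Unlike the concrete [par], this characterizes the parallel
   composition up to isomorphism. *)
Record gluing g h k (f1 f2 : nat -> nat) : Prop := {
  gl_ltn1 : forall v, v < nv g -> f1 v < nv k;
  gl_ltn2 : forall w, w < nv h -> f2 w < nv k;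
  gl_inj1 : forall a b, a < nv g -> b < nv g -> f1 a = f1 b -> a = b;
  gl_inj2 : forall a b, a < nv h -> b < nv h -> f2 a = f2 b -> a = b;
  gl_surj : forall u, u < nv k ->
    (exists2 v, v < nv g & f1 v = u) \/ (exists2 w, w < nv h & f2 w = u);
  gl_fused : forall v w, v < nv g -> w < nv h -> (f1 v = f2 w <-> fused g h v w);
  gl_edges : perm_eq (edges k) (map (emap f1) (edges g) ++ map (emap f2) (edges h)) }.

Definition is_par g h k := exists f1 f2, [/\ gluing g h k f1 f2,
  gsort k = gsort g `|` gsort h,
  forall s, s \in gsort g -> src k s = f1 (src g s) &
  forall s, s \in gsort h -> src k s = f2 (src h s)].

Definition is_par0 g h k := (exists f1 f2, gluing g h k f1 f2) /\ gsort k = fset0.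

Lemma gluing_edges_wf g h k f1 f2 : wf ar g -> wf ar h -> gluing g h k f1 f2 ->
  forall e, e \in edges k -> size e.2 = ar e.1 /\ all (fun v => v < nv k) e.2.
Proof.
move=> wg wh C e; rewrite (perm_mem (gl_edges C)) mem_cat.
case/orP=> /mapP [e' e'_in ->]; rewrite size_map all_map.
- have [-> /allP e'_lt] := wf_edges wg e'_in.
  by split=> //; apply/allP => v /e'_lt /(gl_ltn1 C).
- have [-> /allP e'_lt] := wf_edges wh e'_in.
  by split=> //; apply/allP => v /e'_lt /(gl_ltn2 C).
Qed.

Lemma wf_is_par0 g h k : wf ar g -> wf ar h -> is_par0 g h k -> wf ar k.
Proof.
move=> wg wh [[f1 [f2 C]] sort_k]; split; last split.
- by move=> s; rewrite sort_k in_fset0.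
- by move=> s s'; rewrite sort_k in_fset0.
- exact: gluing_edges_wf C.
Qed.

Lemma wf_is_par g h k : wf ar g -> wf ar h -> is_par g h k -> wf ar k.
Proof.
move=> wg wh [f1 [f2 [C sort_k src1 src2]]]; split; last split.
- move=> s; rewrite sort_k in_fsetU => /orP[] s_in.
  + by rewrite src1 // (gl_ltn1 C) // wf_src.
  + by rewrite src2 // (gl_ltn2 C) // wf_src.
- have glued_same s s' : s \in gsort g -> s' \in gsort h ->
      f1 (src g s) = f2 (src h s') -> s = s'.
    move=> sg s'h /(gl_fused C (wf_src wg sg) (wf_src wh s'h)) [t [tg th e1 e2]].
    by rewrite (wf_inj wg sg tg e1) (wf_inj wh s'h th e2).
  move=> s s'; rewrite sort_k !in_fsetU => /orP[] sk /orP[] s'k.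
  + rewrite !src1 // => /(gl_inj1 C (wf_src wg sk) (wf_src wg s'k)).
    exact: wf_inj.
  + by rewrite src1 // src2 //; exact: glued_same.
  + by rewrite src2 // src1 // => /esym /(glued_same _ _ s'k sk).
  + rewrite !src2 // => /(gl_inj2 C (wf_src wh sk) (wf_src wh s'k)).
    exact: wf_inj.
- exact: gluing_edges_wf C.
Qed.

Lemma gluing_lift g h k f1 f2 (m1 m2 : nat -> nat) : gluing g h k f1 f2 ->
  (forall v w, v < nv g -> w < nv h -> fused g h v w -> m1 v = m2 w) ->
  exists m, (forall v, v < nv g -> m (f1 v) = m1 v) /\
            (forall w, w < nv h -> m (f2 w) = m2 w).
Proof.
move=> C m_agree; pose pre1 := first_preim f1 (nv g).
exists (fun u => if pre1 u < nv g then m1 (pre1 u) else m2 (first_preim f2 (nv h) u)).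
split=> [v lt_v|w lt_w].
  by rewrite /pre1 first_preim_inj ?lt_v //; exact: gl_inj1 C.
case: ifPn => [lt_pre|_]; last by rewrite first_preim_inj //; exact: gl_inj2 C.
by apply: m_agree => //; apply/(gl_fused C lt_pre lt_w); rewrite first_preimK.
Qed.

Lemma gluing_edges_map g h k f1 f2 (m m1 m2 : nat -> nat) :
  wf ar g -> wf ar h -> gluing g h k f1 f2 ->
  (forall v, v < nv g -> m (f1 v) = m1 v) -> (forall w, w < nv h -> m (f2 w) = m2 w) ->
  perm_eq (map (emap m) (edges k)) (map (emap m1) (edges g) ++ map (emap m2) (edges h)).
Proof.
move=> wg wh C mf1 mf2.
rewrite -(map_emap_comp_on wg mf1) -(map_emap_comp_on wh mf2) -map_cat.
exact: perm_map (gl_edges C).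
Qed.

Lemma gluing_map g h k k' f1 f2 f1' f2' : wf ar g -> wf ar h ->
  gluing g h k f1 f2 -> gluing g h k' f1' f2' ->
  exists m, [/\ forall u, u < nv k -> m u < nv k',
    forall a b, a < nv k -> b < nv k -> m a = m b -> a = b &
    perm_eq (map (emap m) (edges k)) (edges k')].
Proof.
move=> wg wh C C'.
have [m [mf1 mf2]] := gluing_lift C (fun v w lt_v lt_w => proj2 (gl_fused C' lt_v lt_w)).
exists m; split.
- move=> u /(gl_surj C) [[v lt_v <-]|[w lt_w <-]].
  + by rewrite mf1 // (gl_ltn1 C').
  + by rewrite mf2 // (gl_ltn2 C').
- move=> a b /(gl_surj C) [[v lt_v <-]|[w lt_w <-]]
    /(gl_surj C) [[v' lt_v' <-]|[w' lt_w' <-]]; rewrite ?mf1 ?mf2 //.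
  + by move/(gl_inj1 C') => ->.
  + by move/(gl_fused C' lt_v lt_w')/(gl_fused C lt_v lt_w').
  + by move/esym/(gl_fused C' lt_v' lt_w)/(gl_fused C lt_v' lt_w) ->.
  + by move/(gl_inj2 C') => ->.
- apply: perm_trans (gluing_edges_map wg wh C mf1 mf2) _.
  by rewrite perm_sym; exact: gl_edges C'.
Qed.

Lemma is_par0_uniq g h k k' : wf ar g -> wf ar h ->
  is_par0 g h k -> is_par0 g h k' -> iso k k'.
Proof.
move=> wg wh [[f1 [f2 C]] sort_k] [[f1' [f2' C']] sort_k'].
have [m [m_lt m_inj m_edges]] := gluing_map wg wh C C'.
have [m' [m'_lt m'_inj _]] := gluing_map wg wh C' C.
have nv_k : nv k = nv k'.
  by apply/eqP; rewrite eqn_leq (inj_on_leq m_inj m_lt) (inj_on_leq m'_inj m'_lt).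
split=> //; split; first by rewrite sort_k sort_k'.
exists m; split=> //; split; first by move=> a b; rewrite !inE; exact: m_inj.
by split=> // s; rewrite sort_k in_fset0.
Qed.

Lemma is_par0_iso g g' h k : wf ar g -> iso g g' -> is_par0 g' h k -> is_par0 g h k.
Proof.
move=> wg [nv_g [sort_g [f [f_lt [f_inj [f_src f_edges]]]]]] [[f1 [f2 C]] sort_k].
have f_inj' a b : a < nv g -> b < nv g -> f a = f b -> a = b.
  by move=> lt_a lt_b; apply: f_inj; rewrite inE.
split=> //; exists (f1 \o f), f2; split.
- by move=> v /f_lt /(gl_ltn1 C).
- exact: gl_ltn2 C.
- by move=> a b lt_a lt_b /(gl_inj1 C (f_lt _ lt_a) (f_lt _ lt_b)); exact: f_inj'.
- exact: gl_inj2 C.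
- move=> u /(gl_surj C) [[v' lt_v' <-]|]; last by right.
  have f_lt' v : v < nv g -> f v < nv g by rewrite {2}nv_g; exact: f_lt.
  rewrite -nv_g in lt_v'; have [v lt_v <-] := inj_on_surj f_inj' f_lt' lt_v'.
  by left; exists v.
- move=> v w lt_v lt_w /=; rewrite (gl_fused C (f_lt _ lt_v) lt_w).
  split=> -[s [s_g s_h e1 e2]].
  + rewrite -sort_g in s_g; exists s; split=> //.
    by apply: f_inj'; rewrite ?wf_src // f_src.
  + by exists s; split; rewrite -?sort_g // e1 f_src.
- apply: perm_trans (gl_edges C) _; rewrite perm_cat2r -map_emap_comp.
  by apply: perm_map; rewrite perm_sym.
Qed.

Lemma is_par0_fused g g' h h' k : is_par0 g h k ->
  nv g = nv g' -> edges g = edges g' -> nv h = nv h' -> edges h = edges h' ->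
  (forall v w, v < nv g -> w < nv h -> (fused g h v w <-> fused g' h' v w)) ->
  is_par0 g' h' k.
Proof.
move=> [[f1 [f2 C]] sort_k] nv_g edges_g nv_h edges_h fusedE; split=> //.
exists f1, f2; split; rewrite -?nv_g -?nv_h -?edges_g -?edges_h.
- exact: gl_ltn1 C.
- exact: gl_ltn2 C.
- exact: gl_inj1 C.
- exact: gl_inj2 C.
- exact: gl_surj C.
- by move=> v w lt_v lt_w; apply: iff_trans (gl_fused C lt_v lt_w) (fusedE _ _ lt_v lt_w).
- exact: gl_edges C.
Qed.

Lemma fused_restrictl tau g H v w :
  fused (restrict tau g) H v w <-> fused g (restrict tau H) v w.
Proof.
split=> -[s []]; rewrite /= !in_fsetI.
- by case/andP=> s_g s_tau s_H -> ->; exists s; rewrite /= in_fsetI s_g s_tau s_H.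
- by move=> s_g /andP[s_H s_tau] -> ->; exists s; rewrite /= in_fsetI s_g s_tau s_H.
Qed.

Lemma fused_restrict_sort g H v w : fused g H v w <-> fused g (restrict (gsort g) H) v w.
Proof.
split=> -[s []]; rewrite /= ?in_fsetI.
- by move=> s_g s_H -> ->; exists s; rewrite /= in_fsetI s_g s_H.
- by move=> s_g /andP[s_H _] -> ->; exists s.
Qed.

Lemma fused_renamel n (p : {perm 'I_n}) g H v w :
  fused (rename p g) H v w <-> fused g (rename (p^-1)%g H) v w.
Proof.
split.
- move=> [s [/imfsetP [t /= t_g ->] s_H -> ->]]; exists t; rewrite extpermK.
  split=> //; apply/imfsetP; exists (extperm (p^-1)%g t) => //=.
  by rewrite invgK extpermK.
- move=> [s [s_g /imfsetP [t /= t_H s_eq] -> ->]]; rewrite invgK in s_eq.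
  exists (extperm (p^-1)%g s); split=> /=; rewrite ?extpermK //.
  + by apply/imfsetP; exists s.
  + by rewrite s_eq extpermKV.
Qed.

Lemma fused_sym g h v w : fused g h v w -> fused h g w v.
Proof. by move=> [s [s_g s_h -> ->]]; exists s. Qed.

Lemma is_par_sym g h k : is_par g h k -> is_par h g k.
Proof.
move=> [f1 [f2 [C sort_k src1 src2]]]; exists f2, f1; split=> //; last by rewrite fsetUC.
split.
- exact: gl_ltn2 C.
- exact: gl_ltn1 C.
- exact: gl_inj2 C.
- exact: gl_inj1 C.
- by move=> u /(gl_surj C) [|]; [right|left].
- move=> v w lt_v lt_w; split.
  + by move/esym/(gl_fused C lt_w lt_v)/fused_sym.
  + by move/fused_sym/(gl_fused C lt_w lt_v)/esym.
- by apply: perm_trans (gl_edges C) _; rewrite perm_catC.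
Qed.

Lemma is_par0_of_par g h k : is_par g h k -> is_par0 g h (restrict fset0 k).
Proof. by move=> [f1 [f2 [[? ? ? ? ? ? ?] _ _ _]]]; split; [exists f1, f2 | rewrite /= fsetI0]. Qed.

Section ParallelComposition.
Variables g h : cgraph A.
Hypotheses (wg : wf ar g) (wh : wf ar h).

Definition common_sources := enum_fset (gsort g `&` gsort h).
Definition par_fused w := has (fun s => src h s == w) common_sources.
Definition par_fresh := [seq w <- iota 0 (nv h) | ~~ par_fused w].
Definition par_map w := match [seq s <- common_sources | src h s == w] with
  | s :: _ => src g s
  | [::] => (nv g + index w par_fresh)%N
  end.

Lemma parE : par g h = CGraph (nv g + size par_fresh)
   (edges g ++ map (emap par_map) (edges h)) (gsort g `|` gsort h)
   (fun s => if s \in gsort g then src g s else par_map (src h s)).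
Proof. by []. Qed.

Lemma par_fusedP w :
  reflect (exists s, [/\ s \in gsort g, s \in gsort h & src h s = w]) (par_fused w).
Proof.
apply: (iffP hasP) => [[s]|[s [s_g s_h <-]]].
  by rewrite in_fsetI => /andP [s_g s_h] /eqP; exists s.
by exists s; rewrite ?in_fsetI ?s_g ?s_h /=.
Qed.

Lemma mem_par_fresh w : (w \in par_fresh) = (w < nv h) && ~~ par_fused w.
Proof. by rewrite mem_filter mem_iota add0n andbC. Qed.

Lemma par_map_fused s : s \in gsort g -> s \in gsort h -> par_map (src h s) = src g s.
Proof.
move=> s_g s_h; rewrite /par_map.
have : s \in [seq t <- common_sources | src h t == src h s].
  by rewrite mem_filter eqxx in_fsetI s_g s_h.
case E: [seq _ <- _ | _] => [|t l] // _.
have : t \in [seq t <- common_sources | src h t == src h s] by rewrite E mem_head.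
by rewrite mem_filter in_fsetI => /andP [/eqP/(wf_inj wh) t_s /andP [_ /t_s ->]].
Qed.

Lemma par_map_fresh w : ~~ par_fused w -> par_map w = (nv g + index w par_fresh)%N.
Proof.
rewrite /par_fused has_filter negbK => /eqP no_common.
by rewrite /par_map no_common.
Qed.

Lemma par_map_lt w : w < nv h -> par_map w < nv g + size par_fresh.
Proof.
move=> lt_w; case: (boolP (par_fused w)) => [/par_fusedP [s [s_g s_h <-]]|fresh_w].
  by rewrite par_map_fused // ltn_addr // wf_src.
by rewrite par_map_fresh // ltn_add2l index_mem mem_par_fresh lt_w.
Qed.

Lemma par_map_ge w : w < nv h -> ~~ par_fused w -> nv g <= par_map w.
Proof. by move=> _ /par_map_fresh ->; rewrite leq_addr. Qed.

Lemma par_map_eq v w : v < nv g -> w < nv h -> (v = par_map w <-> fused g h v w).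
Proof.
move=> lt_v lt_w; split=> [|[s [s_g s_h -> ->]]]; last by rewrite par_map_fused.
case: (boolP (par_fused w)) => [/par_fusedP [s [s_g s_h <-]]|fresh_w].
  by rewrite par_map_fused // => ->; exists s.
by move=> v_eq; move: lt_v; rewrite v_eq ltnNge par_map_ge.
Qed.

Lemma par_map_inj a b : a < nv h -> b < nv h -> par_map a = par_map b -> a = b.
Proof.
move=> lt_a lt_b.
case: (boolP (par_fused a)) => [/par_fusedP [s [s_g s_h <-]]|fresh_a];
case: (boolP (par_fused b)) => [/par_fusedP [s' [s'_g s'_h <-]]|fresh_b].
- by rewrite !par_map_fused // => /(wf_inj wg s_g s'_g) ->.
- rewrite par_map_fused // => src_eq.
  by have := wf_src wg s_g; rewrite src_eq ltnNge par_map_ge.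
- rewrite par_map_fused // => src_eq.
  by have := wf_src wg s'_g; rewrite -src_eq ltnNge par_map_ge.
- rewrite !par_map_fresh // => /addnI index_eq.
  have a_fresh : a \in par_fresh by rewrite mem_par_fresh lt_a.
  have b_fresh : b \in par_fresh by rewrite mem_par_fresh lt_b.
  by rewrite -(nth_index 0 a_fresh) index_eq nth_index.
Qed.

Lemma par_surj u : u < nv g + size par_fresh ->
  (exists2 v, v < nv g & v = u) \/ (exists2 w, w < nv h & par_map w = u).
Proof.
move=> lt_u; case: (ltnP u (nv g)) => [lt_ug|le_gu]; first by left; exists u.
right; have lt_idx : u - nv g < size par_fresh by rewrite ltn_subLR.
have := mem_nth 0 lt_idx; rewrite mem_par_fresh => /andP [lt_w fresh_w].
exists (nth 0 par_fresh (u - nv g)) => //.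
by rewrite par_map_fresh // index_uniq ?subnKC // filter_uniq // iota_uniq.
Qed.

Lemma par_is_par : is_par g h (par g h).
Proof.
rewrite parE; exists id, par_map; split=> //=.
- split=> //=.
  + by move=> v lt_v; rewrite ltn_addr.
  + exact: par_map_lt.
  + exact: par_map_inj.
  + exact: par_surj.
  + exact: par_map_eq.
  + by rewrite map_emap_id.
- by move=> s ->.
- by move=> s s_h; case: ifP => // s_g; rewrite par_map_fused.
Qed.

End ParallelComposition.

Section ParAssoc.
Variables (a b ab H k bH : cgraph A) (f1 f2 F1 F2 e1 e2 phi : nat -> nat).
Hypotheses (wa : wf ar a) (wb : wf ar b) (wab : wf ar ab) (wH : wf ar H).
Hypotheses (Cab : gluing a b ab f1 f2) (sort_ab : gsort ab = gsort a `|` gsort b)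
  (src_ab1 : forall s, s \in gsort a -> src ab s = f1 (src a s))
  (src_ab2 : forall s, s \in gsort b -> src ab s = f2 (src b s)).
Hypothesis Ck : gluing ab H k F1 F2.
Hypotheses (CbH : gluing b H bH e1 e2) (sort_bH : gsort bH = gsort b `|` gsort H)
  (src_bH1 : forall s, s \in gsort b -> src bH s = e1 (src b s))
  (src_bH2 : forall s, s \in gsort H -> src bH s = e2 (src H s)).

Lemma assoc_src_ab1 v s : v < nv a -> s \in gsort ab -> f1 v = src ab s ->
  s \in gsort a /\ v = src a s.
Proof.
move=> lt_v; rewrite sort_ab in_fsetU => /orP [s_a|s_b] src_s.
  by split=> //; apply: (gl_inj1 Cab lt_v (wf_src wa s_a)); rewrite -src_ab1.
have [t [t_a t_b v_t src_st]] :=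
  proj1 (gl_fused Cab lt_v (wf_src wb s_b)) (etrans src_s (src_ab2 s_b)).
by rewrite (wf_inj wb s_b t_b src_st).
Qed.

Lemma assoc_src_ab2 i s : i < nv b -> s \in gsort ab -> f2 i = src ab s ->
  s \in gsort b /\ i = src b s.
Proof.
move=> lt_i; rewrite sort_ab in_fsetU => /orP [s_a|s_b] src_s; last first.
  by split=> //; apply: (gl_inj2 Cab lt_i (wf_src wb s_b)); rewrite -src_ab2.
have [t [t_a t_b src_st i_t]] :=
  proj1 (gl_fused Cab (wf_src wa s_a) lt_i) (esym (etrans src_s (src_ab1 s_a))).
by rewrite (wf_inj wa s_a t_a src_st).
Qed.

Lemma assoc_fused_ab_H s : s \in gsort ab -> s \in gsort H ->
  F1 (src ab s) = F2 (src H s).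
Proof.
by move=> s_ab s_H; apply/(gl_fused Ck (wf_src wab s_ab) (wf_src wH s_H)); exists s.
Qed.

Lemma assoc_fused_b_H i w : i < nv b -> w < nv H -> fused b H i w -> F1 (f2 i) = F2 w.
Proof.
move=> _ _ [s [s_b s_H -> ->]]; rewrite -src_ab2 //.
by apply: assoc_fused_ab_H; rewrite // sort_ab in_fsetU s_b orbT.
Qed.

Lemma assoc_glued_b_H i w : i < nv b -> w < nv H -> F1 (f2 i) = F2 w -> e1 i = e2 w.
Proof.
move=> lt_i lt_w /(gl_fused Ck (gl_ltn2 Cab lt_i) lt_w) [s [s_ab s_H src_i w_s]].
have [s_b i_s] := assoc_src_ab2 lt_i s_ab src_i.
by apply/(gl_fused CbH lt_i lt_w); exists s.
Qed.

Hypotheses (phi_e1 : forall i, i < nv b -> phi (e1 i) = F1 (f2 i))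
  (phi_e2 : forall w, w < nv H -> phi (e2 w) = F2 w).

Lemma assoc_phi_lt u : u < nv bH -> phi u < nv k.
Proof.
case/(gl_surj CbH) => [[i lt_i <-]|[w lt_w <-]].
  by rewrite phi_e1 // (gl_ltn1 Ck) // (gl_ltn2 Cab).
by rewrite phi_e2 // (gl_ltn2 Ck).
Qed.

Lemma assoc_phi_inj x y : x < nv bH -> y < nv bH -> phi x = phi y -> x = y.
Proof.
case/(gl_surj CbH) => [[i lt_i <-]|[w lt_w <-]];
case/(gl_surj CbH) => [[i' lt_i' <-]|[w' lt_w' <-]]; rewrite ?phi_e1 ?phi_e2 //.
- by move/(gl_inj1 Ck (gl_ltn2 Cab lt_i) (gl_ltn2 Cab lt_i'))/(gl_inj2 Cab lt_i lt_i') ->.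
- exact: assoc_glued_b_H.
- by move/esym/(assoc_glued_b_H lt_i' lt_w) ->.
- by move/(gl_inj2 Ck lt_w lt_w') ->.
Qed.

Lemma assoc_surj u : u < nv k ->
  (exists2 v, v < nv a & F1 (f1 v) = u) \/ (exists2 x, x < nv bH & phi x = u).
Proof.
case/(gl_surj Ck) => [[x lt_x <-]|[w lt_w <-]].
  case: (gl_surj Cab lt_x) => [[v lt_v <-]|[i lt_i <-]]; first by left; exists v.
  by right; exists (e1 i); rewrite ?phi_e1 // (gl_ltn1 CbH).
by right; exists (e2 w); rewrite ?phi_e2 // (gl_ltn2 CbH).
Qed.

Lemma assoc_fused v u : v < nv a -> u < nv bH -> (F1 (f1 v) = phi u <-> fused a bH v u).
Proof.
move=> lt_v lt_u; split.
  case: (gl_surj CbH lt_u) => [[i lt_i <-]|[w lt_w <-]]; rewrite ?phi_e1 ?phi_e2 //.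
    move/(gl_inj1 Ck (gl_ltn1 Cab lt_v) (gl_ltn2 Cab lt_i)).
    move/(gl_fused Cab lt_v lt_i) => [s [s_a s_b -> ->]]; exists s.
    by rewrite sort_bH in_fsetU s_b src_bH1.
  move/(gl_fused Ck (gl_ltn1 Cab lt_v) lt_w) => [s [s_ab s_H src_v ->]].
  have [s_a ->] := assoc_src_ab1 lt_v s_ab src_v; exists s.
  by rewrite sort_bH in_fsetU s_H orbT src_bH2.
move=> [s [s_a s_bH -> ->]].
have s_ab : s \in gsort ab by rewrite sort_ab in_fsetU s_a.
rewrite -src_ab1 //; case: (boolP (s \in gsort b)) => [s_b|s_nb].
  by rewrite src_bH1 // phi_e1 ?wf_src // -src_ab2.
have s_H : s \in gsort H by move: s_bH; rewrite sort_bH in_fsetU (negPf s_nb).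
by rewrite src_bH2 // phi_e2 ?wf_src // assoc_fused_ab_H.
Qed.

Lemma assoc_edges :
  perm_eq (edges k) (map (emap (F1 \o f1)) (edges a) ++ map (emap phi) (edges bH)).
Proof.
have edges_ab : perm_eq (map (emap F1) (edges ab))
    (map (emap (F1 \o f1)) (edges a) ++ map (emap (F1 \o f2)) (edges b)).
  by rewrite -(map_emap_comp F1 f1) -(map_emap_comp F1 f2) -map_cat perm_map ?(gl_edges Cab).
apply: perm_trans (gl_edges Ck) _; rewrite (permPl (perm_cat edges_ab (perm_refl _))).
by rewrite -catA perm_cat2l perm_sym (gluing_edges_map wb wH CbH phi_e1 phi_e2).
Qed.

Lemma assoc_gluing : gluing a bH k (F1 \o f1) phi.
Proof.
split.
- by move=> v lt_v; rewrite /= (gl_ltn1 Ck) // (gl_ltn1 Cab).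
- exact: assoc_phi_lt.
- move=> x y lt_x lt_y /(gl_inj1 Ck (gl_ltn1 Cab lt_x) (gl_ltn1 Cab lt_y)).
  exact/(gl_inj1 Cab lt_x lt_y).
- exact: assoc_phi_inj.
- exact: assoc_surj.
- exact: assoc_fused.
- exact: assoc_edges.
Qed.

End ParAssoc.

Lemma is_par0_assoc a b ab H k bH : wf ar a -> wf ar b -> wf ar H ->
  is_par a b ab -> is_par0 ab H k -> is_par b H bH -> is_par0 a bH k.
Proof.
move=> wa wb wH par_ab [[F1 [F2 Ck]] sort_k] par_bH; split=> //.
have wab := wf_is_par wa wb par_ab.
case: par_ab => f1 [f2 [Cab sort_ab src_ab1 src_ab2]].
case: par_bH => e1 [e2 [CbH sort_bH src_bH1 src_bH2]].
have [phi [phi_e1 phi_e2]] := gluing_lift (m1 := F1 \o f2) (m2 := F2) CbH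
  (assoc_fused_b_H wab wH sort_ab src_ab2 Ck).
exists (F1 \o f1), phi.
exact: assoc_gluing wa wb wab wH Cab sort_ab src_ab1 src_ab2 Ck CbH sort_bH src_bH1 src_bH2
  phi_e1 phi_e2.
Qed.

End Gluing.

(** * The syntactic congruence *)

Section SyntacticCongruence.
Variables (A : finType) (ar : A -> nat).
Implicit Types g h k H : cgraph A.

Definition par0 g H := restrict fset0 (par g H).

Lemma wf_restrict tau g : wf ar g -> wf ar (restrict tau g).
Proof.
move=> wg; split; last split.
- by move=> s; rewrite in_fsetI => /andP [s_g _]; exact: wf_src wg s_g.
- by move=> s s'; rewrite !in_fsetI => /andP [s_g _] /andP [s'_g _]; exact: wf_inj wg s_g s'_g.
- by move=> e; exact: wf_edges wg.
Qed.

Lemma wf_rename n (p : {perm 'I_n}) g : wf ar g -> wf ar (rename p g).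
Proof.
move=> wg; split; last split.
- by move=> s /imfsetP [t /= t_g ->]; rewrite extpermK; exact: wf_src wg t_g.
- move=> s s' /imfsetP [t /= t_g ->] /imfsetP [t' /= t'_g ->] /=.
  by rewrite !extpermK => /(wf_inj wg t_g t'_g) ->.
- by move=> e; exact: wf_edges wg.
Qed.

Lemma wf_par g h : wf ar g -> wf ar h -> wf ar (par g h).
Proof. by move=> wg wh; exact: wf_is_par wg wh (par_is_par wg wh). Qed.

Lemma par0_is_par0 g H : wf ar g -> wf ar H -> is_par0 g H (par0 g H).
Proof. by move=> wg wH; exact: is_par0_of_par (par_is_par wg wH). Qed.

Lemma iso_refl g : iso g g.
Proof.
do 2 split=> //; exists id; do 3 split=> //.
by rewrite (map_emap_id (edges g)).
Qed.

Definition graph0 : cgraph A := CGraph 0 [::] fset0 id.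

Lemma wf_graph0 : wf ar graph0.
Proof. by split; [|split] => //= s; rewrite in_fset0. Qed.

Lemma is_par0_graph0 g : gsort g = fset0 -> is_par0 g graph0 g.
Proof.
move=> sort_g; split=> //; exists id, id; split=> //.
- by move=> u lt_u; left; exists u.
- by rewrite map_emap_id cats0.
Qed.

Variable L : cgraph A -> Prop.
Hypothesis L_iso : forall g h, wf ar g -> wf ar h -> iso g h -> L g -> L h.

Lemma L_is_par0 g H k : wf ar g -> wf ar H -> is_par0 g H k -> (L k <-> L (par0 g H)).
Proof.
move=> wg wH par0_k; have par0_gH := par0_is_par0 wg wH.
have wk := wf_is_par0 wg wH par0_k; have wgH := wf_is_par0 wg wH par0_gH.
by split; apply: L_iso => //; apply: is_par0_uniq wg wH _ _.
Qed.

Lemma L_par0_restrictl tau g H : wf ar g -> wf ar H ->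
  L (par0 (restrict tau g) H) <-> L (par0 g (restrict tau H)).
Proof.
move=> wg wH; apply: (L_is_par0 wg (wf_restrict tau wH)).
apply: (is_par0_fused (par0_is_par0 (wf_restrict tau wg) wH)) => // v w _ _.
exact: fused_restrictl.
Qed.

Lemma L_par0_renamel n (p : {perm 'I_n}) g H : wf ar g -> wf ar H ->
  L (par0 (rename p g) H) <-> L (par0 g (rename (p^-1)%g H)).
Proof.
move=> wg wH; apply: (L_is_par0 wg (wf_rename (p^-1)%g wH)).
apply: (is_par0_fused (par0_is_par0 (wf_rename p wg) wH)) => // v w _ _.
exact: fused_renamel.
Qed.

(* Only the sources of [H] labelled in the sort of [g] matter: this is why a
   congruence of [G^tau] controls the graphs of sort [tau]. *)
Lemma L_par0_restrict_sort g H : wf ar g -> wf ar H ->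
  L (par0 g H) <-> L (par0 g (restrict (gsort g) H)).
Proof.
move=> wg wH; apply: (L_is_par0 wg (wf_restrict (gsort g) wH)).
apply: (is_par0_fused (par0_is_par0 wg wH)) => // v w _ _.
exact: fused_restrict_sort.
Qed.

Lemma L_par0_parA a b H : wf ar a -> wf ar b -> wf ar H ->
  L (par0 (par a b) H) <-> L (par0 a (par b H)).
Proof.
move=> wa wb wH; apply: (L_is_par0 wa (wf_par wb wH)).
exact: is_par0_assoc wa wb wH (par_is_par wa wb) (par0_is_par0 (wf_par wa wb) wH)
  (par_is_par wb wH).
Qed.

Lemma L_par0_parCA a b H : wf ar a -> wf ar b -> wf ar H ->
  L (par0 (par a b) H) <-> L (par0 b (par a H)).
Proof.
move=> wa wb wH; apply: (L_is_par0 wb (wf_par wa wH)).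
exact: is_par0_assoc wb wa wH (is_par_sym (par_is_par wa wb)) (par0_is_par0 (wf_par wa wb) wH)
  (par_is_par wa wH).
Qed.

Definition syntactic_equiv g h := [/\ wf ar g, wf ar h, gsort g = gsort h &
  forall H, wf ar H -> (L (par0 g H) <-> L (par0 h H))].

Lemma syntactic_equiv_iso g h : wf ar g -> wf ar h -> iso g h -> syntactic_equiv g h.
Proof.
move=> wg wh gh; split=> //; first by case: gh => _ [].
move=> H wH; apply: iff_sym.
exact: L_is_par0 wg wH (is_par0_iso wg gh (par0_is_par0 wh wH)).
Qed.

Lemma syntactic_equiv_sym g h : syntactic_equiv g h -> syntactic_equiv h g.
Proof. by move=> [wg wh sort_gh gh]; split=> // H wH; apply: iff_sym (gh H wH). Qed.

Lemma syntactic_equiv_trans g h k :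
  syntactic_equiv g h -> syntactic_equiv h k -> syntactic_equiv g k.
Proof.
move=> [wg _ sort_gh gh] [_ wk sort_hk hk]; split=> //; first by rewrite sort_gh.
by move=> H wH; apply: iff_trans (gh H wH) (hk H wH).
Qed.

Lemma syntactic_equiv_restrict tau g g' :
  syntactic_equiv g g' -> syntactic_equiv (restrict tau g) (restrict tau g').
Proof.
move=> [wg wg' sort_g gg']; split; rewrite /= ?sort_g //; try exact: wf_restrict.
move=> H wH; rewrite (L_par0_restrictl tau wg wH) (L_par0_restrictl tau wg' wH).
exact/gg'/wf_restrict.
Qed.

Lemma syntactic_equiv_rename n (p : {perm 'I_n}) g g' :
  syntactic_equiv g g' -> syntactic_equiv (rename p g) (rename p g').
Proof.
move=> [wg wg' sort_g gg']; split; rewrite /= ?sort_g //; try exact: wf_rename.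
move=> H wH; rewrite (L_par0_renamel p wg wH) (L_par0_renamel p wg' wH).
exact/gg'/wf_rename.
Qed.

Lemma syntactic_equiv_par g g' h h' :
  syntactic_equiv g g' -> syntactic_equiv h h' -> syntactic_equiv (par g h) (par g' h').
Proof.
move=> [wg wg' sort_g gg'] [wh wh' sort_h hh'].
split; rewrite /= ?sort_g ?sort_h //; try exact: wf_par.
move=> H wH; rewrite (L_par0_parA wg wh wH) (gg' _ (wf_par wh wH)) -(L_par0_parA wg' wh wH).
by rewrite (L_par0_parCA wg' wh wH) (hh' _ (wf_par wg' wH)) -(L_par0_parCA wg' wh' wH).
Qed.

Lemma syntactic_equiv_finite_index tau : recognizable_Gtau ar tau L ->
  exists reps : seq (cgraph A), forall g, wf ar g -> gsort g = tau ->
    exists r, List.In r reps /\ syntactic_equiv g r.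
Proof.
move=> [R [R_wf [R_iso [R_sym [_ [R_restrict [_ [R_par [R_fin R_sat]]]]]]]]].
have [reps reps_cover] := R_fin tau (fsubset_refl tau).
exists reps => g wg sort_g; have [r [r_in gr]] := reps_cover g wg sort_g.
have [_ wr _ sort_r] := R_wf _ _ gr.
exists r; split=> //; split=> // H wH.
rewrite (L_par0_restrict_sort wg wH) (L_par0_restrict_sort wr wH) -sort_r sort_g.
have wHtau := wf_restrict tau wH.
have HR : R (par0 g (restrict tau H)) (par0 r (restrict tau H)).
  apply: R_restrict (fsub0set _) _.
  exact: R_par gr (R_iso _ _ wHtau wHtau (fsubsetIr _ _) (iso_refl _)).
by split; apply: R_sat; [exact: HR | exact: R_sym].
Qed.

Hypothesis L_sourceless : forall g, L g -> wf ar g /\ gsort g = fset0.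

Lemma syntactic_equiv_saturated g h : syntactic_equiv g h -> L g -> L h.
Proof.
move=> [wg wh sort_gh gh] Lg; have [_ sort_g] := L_sourceless Lg.
have sort_h : gsort h = fset0 by rewrite -sort_gh.
rewrite (L_is_par0 wh wf_graph0 (is_par0_graph0 sort_h)) -gh ?wf_graph0 //.
by rewrite -(L_is_par0 wg wf_graph0 (is_par0_graph0 sort_g)).
Qed.

Lemma recognizable_G_of_Gtau :
  (forall tau, recognizable_Gtau ar tau L) -> recognizable_G ar L.
Proof.
move=> rec_tau; exists syntactic_equiv.
split; first by move=> g h [wg wh sort_gh _]; split.
split; first by move=> g h wg wh _; exact: syntactic_equiv_iso.
split; first exact: syntactic_equiv_sym.
split; first exact: syntactic_equiv_trans.
split; first by move=> tau g g' _; exact: syntactic_equiv_restrict.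
split; first by move=> n p g g' _; exact: syntactic_equiv_rename.
split; first exact: syntactic_equiv_par.
split; first by move=> tau _; exact: syntactic_equiv_finite_index.
exact: syntactic_equiv_saturated.
Qed.

End SyntacticCongruence.

Lemma recognizable_Gtau_of_G (A : finType) (ar : A -> nat) tau (L : cgraph A -> Prop) :
  recognizable_G ar L -> recognizable_Gtau ar tau L.
Proof.
move=> [R [R_wf [R_iso [R_sym [R_trans [R_restrict [R_rename [R_par [R_fin R_sat]]]]]]]]].
exists (fun g h => R g h /\ gsort g `<=` tau).
split; first by move=> g h [/R_wf [wg wh _ sort_gh] sub_g]; split.
split; first by move=> g h wg wh sub_g gh; split=> //; exact: R_iso.
split.
  by move=> g h [gh sub_g]; have [_ _ _ <-] := R_wf _ _ gh; split=> //; exact: R_sym.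
split; first by move=> g h k [gh sub_g] [hk _]; split=> //; exact: R_trans gh hk.
split.
  move=> sigma g g' sub_sigma [gg' _]; split; first exact: R_restrict.
  exact: fsubset_trans (fsubsetIr _ _) sub_sigma.
split.
  move=> n p g g' p_fix [gg' sub_g]; split; first exact: R_rename.
  apply/fsubsetP => _ /imfsetP [s /= /(fsubsetP sub_g) s_tau ->].
  apply: contraT => out_tau; have := p_fix _ out_tau; rewrite extpermK => s_eq.
  by rewrite -s_eq s_tau in out_tau.
split.
  by move=> g g' h h' [gg' sub_g] [hh' sub_h]; split; [exact: R_par | rewrite fsubUset sub_g].
split.
  move=> sigma sub_sigma; have [reps reps_cover] := R_fin sigma I.
  exists reps => g wg sort_g; have [r [r_in gr]] := reps_cover g wg sort_g.
  by exists r; rewrite sort_g.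
by move=> g h [gh _]; exact: R_sat.
Qed.

Theorem theorem7p4 (A : finType) (ar : A -> nat)
  (ar_pos : forall a, 0 < ar a)
  (L : cgraph A -> Prop)
  (L_sourceless : forall g, L g -> wf ar g /\ gsort g = fset0)
  (L_iso : forall g h, wf ar g -> wf ar h -> iso g h -> L g -> L h) :
  recognizable_G ar L <-> (forall tau : {fset nat}, recognizable_Gtau ar tau L).
Proof.
split=> [rec_G tau|]; first exact: recognizable_Gtau_of_G.
exact: recognizable_G_of_Gtau.
Qed.
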